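(* Let $\mathbb{F}$ be an algebraically closed field of characteristic zero, $J_1=E_{12}$ and $J_2=E_{12}+E_{23}$. Let $\underline{A}=(J_2,A_2,A_3)$ and $\underline{B}=(J_1,B_2,B_3)$ be elements of $\mathcal{N}_3^3$ such that $f(\underline{A})=f(\underline{B})$ for all $f\in S_{3,3}$. Then $f(\underline{A})=f(\underline{B})$ for all $f\in P_{3,3}$.
   Context: $E_{ij}$ is the $3\times3$ matrix unit. $\mathcal{N}_3^3$ is the set of triples of nilpotent $3\times3$ matrices over $\mathbb{F}$. $\mathrm{tr}(Y_{i_1}\cdots Y_{i_r})$ denotes the function $\underline{A}\mapsto\mathrm{tr}(A_{i_1}\cdots A_{i_r})$. $S_{3,3}$ is the set consisting of: $\mathrm{tr}(Y_iY_j),\ \mathrm{tr}(Y_i^2Y_j),\ \mathrm{tr}(Y_iY_j^2),\ \mathrm{tr}(Y_i^2Y_j^2),\ \mathrm{tr}(Y_i^2Y_j^2Y_iY_j)$ for $1\le i<j\le3$; $\mathrm{tr}(Y_1Y_2Y_3)$, $\mathrm{tr}(Y_1Y_3Y_2)$; $\mathrm{tr}(Y_i^2Y_jY_k)$ for $\{i,j,k\}=\{1,2,3\}$; $\mathrm{tr}(Y_1^2Y_2Y_1Y_3)$, $\mathrm{tr}(Y_2^2Y_1Y_2Y_3)$, $\mathrm{tr}(Y_3^2Y_1Y_3Y_2)$. $P_{3,3}=S_{3,3}\sqcup P'_{3,3}$, where $P'_{3,3}$ consists of $\mathrm{tr}(Y_i^2Y_j^2Y_k)$ and $\mathrm{tr}(Y_i^2Y_j^2Y_iY_k)$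 for $\{i,j,k\}=\{1,2,3\}$, and $\mathrm{tr}(Y_1^2Y_2^2Y_3^2)$. *)

From mathcomp Require Import all_boot all_order all_algebra.
Set Implicit Arguments. Unset Strict Implicit. Unset Printing Implicit Defensive.
Import GRing.Theory.
Local Open Scope ring_scope.

Definition nilpotent_mx (F : fieldType) (A : 'M[F]_3) : Prop :=
  exists n : nat, A ^+ n = 0.

(* Matrix units of 'M_3, indexed from 1 as in the paper: E i j. *)
Definition E (F : fieldType) (i j : nat) : 'M[F]_3 :=
  delta_mx (inord i.-1) (inord j.-1).

Definition J1 (F : fieldType) : 'M[F]_3 := E F 1 2.
Definition J2 (F : fieldType) : 'M[F]_3 := E F 1 2 + E F 2 3.

Definition Ysel (F : fieldType) (A1 A2 A3 : 'M[F]_3) (k : nat) : 'M[F]_3 :=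
  match k with 1 => A1 | 2 => A2 | 3 => A3 | _ => 0 end.

(* tr(Y_{i_1} ... Y_{i_r}) evaluated at (A1,A2,A3), for the word [:: i_1; ...; i_r]. *)
Definition trw (F : fieldType) (A1 A2 A3 : 'M[F]_3) (w : seq nat) : F :=
  \tr (\prod_(k <- w) Ysel A1 A2 A3 k).

Definition pairs3 : seq (nat * nat) := [:: (1,2); (1,3); (2,3)]%N.
Definition perms3 : seq (nat * nat * nat) :=
  [:: (1,2,3); (1,3,2); (2,1,3); (2,3,1); (3,1,2); (3,2,1)]%N.

Definition S33 : seq (seq nat) :=
  flatten [seq [:: [:: p.1; p.2];
                   [:: p.1; p.1; p.2];
                   [:: p.1; p.2; p.2];
                   [:: p.1; p.1; p.2; p.2];
                   [:: p.1; p.1; p.2; p.2; p.1; p.2]] | p <- pairs3]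
  ++ [:: [:: 1; 2; 3]; [:: 1; 3; 2]]%N
  ++ [seq [:: t.1.1; t.1.1; t.1.2; t.2] | t <- perms3]
  ++ [:: [:: 1; 1; 2; 1; 3]; [:: 2; 2; 1; 2; 3]; [:: 3; 3; 1; 3; 2]]%N.

Definition P33' : seq (seq nat) :=
  [seq [:: t.1.1; t.1.1; t.1.2; t.1.2; t.2] | t <- perms3]
  ++ [seq [:: t.1.1; t.1.1; t.1.2; t.1.2; t.1.1; t.2] | t <- perms3]
  ++ [:: [:: 1; 1; 2; 2; 3; 3]]%N.

Definition P33 : seq (seq nat) := S33 ++ P33'.

(* On the J1 side Y1^2 = 0, so the elements tr(Y1^2 w) of S_{3,3} vanish at B,
   hence at A. Since tr(J2^2 W) is the (3,1) entry of W, this forces A2, A3 and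
   J2 to share either a zero last row or a zero first column. For a 3x3 matrix N
   with tr N = tr N^2 = 0 the polarized Cayley-Hamilton identity
     N^2 M + N M N + M N^2 = tr(M) N^2 + tr(NM) N + tr(N^2 M)
   then shows that N^2 is absorbed by the idempotent E33 (resp. E11), which kills
   every word of the same shape: tr(Y_k^2 w) vanishes at A for all nonempty w,
   in particular on P'_{3,3}. At B this makes tr(B2^2 B3), tr(B2 B3^2) and
   tr(B2^2 B3^2) vanish; the same identity and the primeness of the matrix
   algebra (Y M X = 0 for all M forces Y = 0 or X = 0) give
   B2^2 B3^2 = B3^2 B2^2 = 0. Every word of P'_{3,3} has a factor Y1^2,
   Y2^2 Y3^2 or Y3^2 Y2^2, so it vanishes at B as well. *)

From mathcomp Require Import all_boot all_order all_algebra.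
From mathcomp Require Import ring.
Import GRing.Theory.
Local Open Scope ring_scope.
Set Implicit Arguments. Unset Strict Implicit. Unset Printing Implicit Defensive.

Lemma mul_delta_mxE (R : pzRingType) m n p q (Y : 'M[R]_(m, n)) (X : 'M[R]_(p, q))
    j k i l :
  (Y *m delta_mx j k *m X) i l = Y i j * X k l.
Proof.
rewrite -(mul_delta_mx (0 : 'I_1)) mulmxA -colE -mulmxA -rowE.
by rewrite mxE big_ord1 !mxE.
Qed.

Lemma mulmx_prime (R : idomainType) m n p q (Y : 'M[R]_(m, n)) (X : 'M[R]_(p, q)) :
  (forall M, Y *m M *m X = 0) -> Y = 0 \/ X = 0.
Proof.
move=> YMX0; have [-> | /matrix0Pn[i [j Yij_neq0]]] := eqVneq Y 0; [by left | right].
apply/matrixP => k l; move: (congr1 (fun A : 'M_(m, q) => A i l) (YMX0 (delta_mx j k))).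
by rewrite /= mul_delta_mxE !mxE => /eqP; rewrite mulf_eq0 (negPf Yij_neq0) => /eqP.
Qed.

Lemma delta_mul_row0 (R : pzRingType) m n (i : 'I_m) (A : 'M[R]_(m, n)) :
  row i A = 0 -> delta_mx i i *m A = 0.
Proof. by rewrite -(mul_delta_mx (0 : 'I_1)) -mulmxA -rowE => ->; rewrite mulmx0. Qed.

Lemma mul_delta_col0 (R : pzRingType) m n (j : 'I_n) (A : 'M[R]_(m, n)) :
  col j A = 0 -> A *m delta_mx j j = 0.
Proof. by rewrite -(mul_delta_mx (0 : 'I_1)) mulmxA -colE => ->; rewrite mul0mx. Qed.

Lemma mxtrace_delta (R : pzRingType) n (i : 'I_n) : \tr (delta_mx i i : 'M[R]_n) = 1.
Proof.
by rewrite /mxtrace (bigD1 i) //= big1 => [|j /negPf ji]; rewrite !mxE ?eqxx ?ji ?addr0.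
Qed.

Section Nilpotent.
Variables (F : closedFieldType) (n k : nat) (N : 'M[F]_n.+1).
Hypothesis Nk0 : N ^+ k = 0.

Lemma eigenvalue_nilpotent a : eigenvalue N a -> a = 0.
Proof.
case/eigenvalueP=> v vN v_neq0.
have vNm m : v *m N ^+ m = a ^+ m *: v.
  elim: m => [|m IHm]; first by rewrite !expr0 mulmx1 scale1r.
  by rewrite exprSr -mulmxE mulmxA IHm -scalemxAl vN scalerA -exprSr.
move/eqP: (vNm k); rewrite Nk0 mulmx0 eq_sym scaler_eq0 (negPf v_neq0) orbF.
by rewrite expf_eq0 => /andP[_ /eqP].
Qed.

Lemma char_poly_nilpotent : char_poly N = 'X^(n.+1).
Proof.
have [r Nr] := closed_field_poly_normal (char_poly N).
rewrite (monicP (char_poly_monic N)) scale1r in Nr.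
have r0 : {in r, forall z, 'X - z%:P = 'X :> {poly F}}.
  move=> z zr; rewrite (@eigenvalue_nilpotent z) ?subr0 //.
  by rewrite eigenvalue_root_char Nr root_prod_XsubC.
rewrite (eq_big_seq _ r0) big_const_seq count_predT iter_mulr_1 in Nr.
by move: (size_char_poly N); rewrite Nr size_polyXn => -[<-].
Qed.

Lemma nilpotent_exp_size : N ^+ n.+1 = 0.
Proof.
by have := Cayley_Hamilton N; rewrite char_poly_nilpotent rmorphXn /= horner_mx_X.
Qed.

Lemma nilpotent_trace : \tr N = 0.
Proof.
have := char_poly_trace N (ltn0Sn n); rewrite char_poly_nilpotent coefXn /=.
by rewrite eqn_leq ltnn andbF => /eqP; rewrite eq_sym oppr_eq0 => /eqP.
Qed.

End Nilpotent.

Lemma nilpotent_mx3 (F : closedFieldType) (N : 'M[F]_3) :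
  nilpotent_mx N -> [/\ N * N * N = 0, \tr N = 0 & \tr (N * N) = 0].
Proof.
move=> [k Nk0]; have N3 : N ^+ 3 = 0 := nilpotent_exp_size Nk0.
split.
- by rewrite -N3 !exprS expr0 mulr1 mulrA.
- exact: nilpotent_trace Nk0.
- by apply: (@nilpotent_trace _ _ 3); rewrite -expr2 -exprM mulnC exprM N3 expr0n.
Qed.

(* Indices are 0-based: [A o2 o0] is the entry a_31 of the paper. *)
Definition o0 : 'I_3 := @Ordinal 3 0 isT.
Definition o1 : 'I_3 := @Ordinal 3 1 isT.
Definition o2 : 'I_3 := @Ordinal 3 2 isT.

Lemma ord3P (P : 'I_3 -> Prop) : P o0 -> P o1 -> P o2 -> forall i, P i.
Proof.
by move=> P0 P1 P2 [[|[|[|m]]] lt_m3] //; [move: P0 | move: P1 | move: P2];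
  congr P; apply: val_inj.
Qed.

Lemma sum_ord3 (R : nmodType) (f : 'I_3 -> R) : \sum_i f i = f o0 + f o1 + f o2.
Proof.
by rewrite !big_ord_recr big_ord0 /= add0r; congr (f _ + f _ + f _); apply: val_inj.
Qed.

Lemma mulmx3E (R : pzRingType) (A B : 'M[R]_3) :
  A * B = \matrix_(i, j) (A i o0 * B o0 j + A i o1 * B o1 j + A i o2 * B o2 j).
Proof. by apply/matrixP => i j; rewrite -mulmxE !mxE sum_ord3. Qed.

Lemma mxtrace3E (R : pzRingType) (A : 'M[R]_3) : \tr A = A o0 o0 + A o1 o1 + A o2 o2.
Proof. exact: sum_ord3. Qed.

(* The derivative of Cayley-Hamilton at N in the direction M. When tr N = 0 its
   defect is c2(N) (tr M - M), where c2(N) = - tr(N^2) / 2 is the second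
   coefficient of the characteristic polynomial. *)
Lemma polar_cayley_hamilton3_trace0 (R : comNzRingType) (N M : 'M[R]_3) : \tr N = 0 ->
  2%:R *: (N * N * M + N * M * N + M * N * N
           - (\tr M *: (N * N) + \tr (N * M) *: N + (\tr (N * N * M))%:M))
  = \tr (N * N) *: (M - (\tr M)%:M).
Proof.
rewrite mxtrace3E => /eqP; rewrite addrC addr_eq0 => /eqP N22.
apply/matrixP; apply: ord3P; apply: ord3P;
  rewrite !mxtrace3E !mulmx3E !mxE /= N22; ring.
Qed.

Section PolarCayleyHamilton3.
Variables (F : fieldType) (N : 'M[F]_3).
Hypotheses (two_neq0 : 2%:R != 0 :> F) (trN : \tr N = 0) (trN2 : \tr (N * N) = 0).

Lemma polar_cayley_hamilton3 M :
  N * N * M + N * M * N + M * N * N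
  = \tr M *: (N * N) + \tr (N * M) *: N + (\tr (N * N * M))%:M.
Proof.
apply/eqP; rewrite -subr_eq0 -(inj_eq (scalerI two_neq0)) scaler0.
by rewrite polar_cayley_hamilton3_trace0 // trN2 scale0r.
Qed.

Lemma sqr_mul_annihilator M : M * N = 0 -> N * N * M = \tr M *: (N * N).
Proof.
move=> MN0; have := polar_cayley_hamilton3 M.
rewrite -[N * M * N]mulrA MN0 mulr0 mul0r !addr0 => ->.
rewrite -!mulmxE mxtrace_mulC [\tr (_ *m M)]mxtrace_mulC !mulmxE mulrA MN0 mul0r.
by rewrite mxtrace0 raddf0 !scale0r !addr0.
Qed.

Lemma annihilator_mul_sqr M : N * M = 0 -> M * (N * N) = \tr M *: (N * N).
Proof.
move=> NM0; have := polar_cayley_hamilton3 M.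
rewrite -[N * N * M]mulrA NM0 mulr0 mul0r mxtrace0 raddf0 scale0r !addr0 !add0r.
by rewrite mulrA.
Qed.

Lemma sqr_mul_delta_row0 i : row i N = 0 -> N * N * delta_mx i i = N * N.
Proof.
by move/delta_mul_row0 => eN0; rewrite sqr_mul_annihilator // mxtrace_delta scale1r.
Qed.

Lemma delta_mul_sqr_col0 j : col j N = 0 -> delta_mx j j * (N * N) = N * N.
Proof.
by move/mul_delta_col0 => Ne0; rewrite annihilator_mul_sqr // mxtrace_delta scale1r.
Qed.

Hypothesis N3 : N * N * N = 0.

Lemma sqr_sandwich M : N * N * M * (N * N) = \tr (N * N * M) *: (N * N).
Proof.
have NNN X : X * N * N * N = 0 by rewrite -!mulrA (mulrA N) N3 mulr0.
have := congr1 (fun X => N * X * N) (polar_cayley_hamilton3 M).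
rewrite /= -scalemx1 !(mulrDl, mulrDr) -!(scalerAr, scalerAl) !mulrA !NNN N3 !mul0r.
by rewrite mulr1 !scaler0 !add0r !addr0 => ->.
Qed.

End PolarCayleyHamilton3.

Section SquareProduct.
Variables (F : fieldType) (U V : 'M[F]_3).
Hypotheses (two_neq0 : 2%:R != 0 :> F).
Hypotheses (U3 : U * U * U = 0) (trU : \tr U = 0) (trU2 : \tr (U * U) = 0).
Hypotheses (V3 : V * V * V = 0) (trV : \tr V = 0) (trV2 : \tr (V * V) = 0).

Lemma mul_sqr_sqr_eq0_split X :
  X * (V * V) * (U * U) = 0 -> X * (V * V) = 0 \/ V * V * (U * U) = 0.
Proof.
move=> XVU0; apply: mulmx_prime => M; rewrite !mulmxE.
have -> : X * (V * V) * M * (V * V * (U * U)) = X * (V * V * M * (V * V)) * (U * U).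
  by rewrite !mulrA.
by rewrite sqr_sandwich // -scalerAr -scalerAl XVU0 scaler0.
Qed.

Lemma sqr_mul_sqr_eq0 :
  \tr (U * U * (V * V)) = 0 -> \tr (U * (V * V)) = 0 -> V * V * (U * U) = 0.
Proof.
move=> trUUVV trUVV.
have [UUVV0 | //] : U * U * (V * V) = 0 \/ V * V * (U * U) = 0.
  by apply: mul_sqr_sqr_eq0_split; rewrite sqr_sandwich // trUUVV scale0r.
have [UVV0 | //] : U * (V * V) = 0 \/ V * V * (U * U) = 0.
  apply: mul_sqr_sqr_eq0_split.
  by rewrite annihilator_mul_sqr ?trUVV ?scale0r // mulrA.
by rewrite annihilator_mul_sqr // trV2 scale0r.
Qed.

End SquareProduct.

Section Words.
Variables (F : fieldType) (A1 A2 A3 : 'M[F]_3).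
Local Notation Y := (Ysel A1 A2 A3).

Lemma YselP (P : 'M[F]_3 -> Prop) : P 0 -> P A1 -> P A2 -> P A3 -> forall k, P (Y k).
Proof. by move=> P0 P1 P2 P3 [|[|[|[|k]]]]. Qed.

Lemma row_prod_Ysel i w :
  (forall k, row i (Y k) = 0) -> w != [::] -> row i (\prod_(k <- w) Y k) = 0.
Proof.
by move=> rowY0; case: w => // k w _; rewrite big_cons -mulmxE row_mul rowY0 mul0mx.
Qed.

Lemma col_prod_Ysel j w :
  (forall k, col j (Y k) = 0) -> w != [::] -> col j (\prod_(k <- w) Y k) = 0.
Proof.
move=> colY0; case/lastP: w => // w k _.
by rewrite -cats1 big_cat big_seq1 /= -mulmxE !colE -mulmxA -colE colY0 mulmx0.
Qed.

Lemma trw_sqr_cons_row0 i : 2%:R != 0 :> F ->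
    (forall k, [/\ row i (Y k) = 0, \tr (Y k) = 0 & \tr (Y k * Y k) = 0]) ->
  forall k w, w != [::] -> trw A1 A2 A3 [:: k, k & w] = 0.
Proof.
move=> two_neq0 YP k w w_neq0; have [rowY0 trY trY2] := YP k.
rewrite /trw !big_cons mulrA -(sqr_mul_delta_row0 two_neq0 trY trY2 rowY0).
rewrite -mulrA -!mulmxE delta_mul_row0 ?mulmx0 ?mxtrace0 // row_prod_Ysel // => l.
by case: (YP l).
Qed.

Lemma trw_sqr_cons_col0 j : 2%:R != 0 :> F ->
    (forall k, [/\ col j (Y k) = 0, \tr (Y k) = 0 & \tr (Y k * Y k) = 0]) ->
  forall k w, w != [::] -> trw A1 A2 A3 [:: k, k & w] = 0.
Proof.
move=> two_neq0 YP k w w_neq0; have [colY0 trY trY2] := YP k.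
rewrite /trw !big_cons mulrA -(delta_mul_sqr_col0 two_neq0 trY trY2 colY0).
rewrite -!mulmxE mxtrace_mulC !mulmxA mul_delta_col0 ?mul0mx ?mxtrace0 //.
by rewrite col_prod_Ysel // => l; case: (YP l).
Qed.

Lemma trw_rot n w : trw A1 A2 A3 (rot n w) = trw A1 A2 A3 w.
Proof.
by rewrite /trw /rot big_cat -mulmxE mxtrace_mulC mulmxE -big_cat cat_take_drop.
Qed.

Lemma prod_Ysel_infix_eq0 u w :
  \prod_(k <- u) Y k = 0 -> infix u w -> \prod_(k <- w) Y k = 0.
Proof. by move=> u0 /infixP[s [s' ->]]; rewrite !big_cat /= u0 mul0r mulr0. Qed.

End Words.

Lemma mul_pairs_eq0 (R : idomainType) (a1 a2 b1 b2 : R) :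
    a1 * b1 = 0 -> a1 * b2 = 0 -> a2 * b1 = 0 -> a2 * b2 = 0 ->
  (a1 = 0 /\ a2 = 0) \/ (b1 = 0 /\ b2 = 0).
Proof.
move=> ab11 ab12 ab21 ab22.
have [a1_0 | a1_neq0] := eqVneq a1 0;
  last by right; split; apply: (mulfI a1_neq0); rewrite mulr0.
have [a2_0 | a2_neq0] := eqVneq a2 0;
  last by right; split; apply: (mulfI a2_neq0); rewrite mulr0.
by left.
Qed.

Section Entries3.
Variable R : idomainType.
Implicit Types A B N : 'M[R]_3.

Lemma mul_row2_col0 A B :
  A o2 o0 = 0 -> B o2 o0 = 0 -> (A * B) o2 o0 = A o2 o1 * B o1 o0.
Proof. by move=> A20 B20; rewrite mulmx3E mxE A20 B20 !mul0r mulr0 add0r addr0. Qed.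

Lemma row2_cube_eq0 N : N * N * N = 0 -> N o2 o0 = 0 -> N o2 o1 = 0 -> row o2 N = 0.
Proof.
move=> N3 N20 N21; have N22 : N o2 o2 = 0.
  have : (N * N * N) o2 o2 = N o2 o2 ^+ 3 by rewrite !mulmx3E !mxE N20 N21; ring.
  by rewrite N3 mxE => /esym/eqP; rewrite expf_eq0 => /eqP.
by apply/rowP; apply: ord3P; rewrite !mxE.
Qed.

Lemma col0_cube_eq0 N : N * N * N = 0 -> N o1 o0 = 0 -> N o2 o0 = 0 -> col o0 N = 0.
Proof.
move=> N3 N10 N20; have N00 : N o0 o0 = 0.
  have : (N * N * N) o0 o0 = N o0 o0 ^+ 3 by rewrite !mulmx3E !mxE N10 N20; ring.
  by rewrite N3 mxE => /esym/eqP; rewrite expf_eq0 => /eqP.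
by apply/colP; apply: ord3P; rewrite !mxE.
Qed.

End Entries3.

Section Jordan.
Variable F : fieldType.

Lemma J1_sqr : J1 F * J1 F = 0.
Proof. by rewrite /J1 /E -mulmxE mul_delta_mx_cond -val_eqE /= !inordK. Qed.

Lemma J2E : J2 F = \matrix_(i, j) (j == i.+1 :> nat)%:R.
Proof.
apply/matrixP; rewrite /J2 /E; apply: ord3P; apply: ord3P; rewrite !mxE.
all: by rewrite /= -!val_eqE /= ?inordK //= ?addr0 ?add0r.
Qed.

Lemma mxtrace_J2 : \tr (J2 F) = 0.
Proof. by rewrite J2E mxtrace3E !mxE /= !addr0. Qed.

Lemma mxtrace_J2_sqr : \tr (J2 F * J2 F) = 0.
Proof. by rewrite J2E mxtrace3E !mulmx3E !mxE /=; ring. Qed.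

Lemma row2_J2 : row o2 (J2 F) = 0.
Proof. by apply/rowP; apply: ord3P; rewrite J2E !mxE. Qed.

Lemma col0_J2 : col o0 (J2 F) = 0.
Proof. by apply/colP; apply: ord3P; rewrite J2E !mxE. Qed.

Lemma trw_J2_sqr_cons (X Y : 'M[F]_3) w :
  trw (J2 F) X Y [:: 1, 1 & w]%N = (\prod_(k <- w) Ysel (J2 F) X Y k) o2 o0.
Proof. by rewrite /trw !big_cons /= mulrA J2E mxtrace3E !mulmx3E !mxE /=; ring. Qed.

End Jordan.

Section J2Words.
Variables (F : fieldType) (X Y : 'M[F]_3).
Hypotheses (two_neq0 : 2%:R != 0 :> F).
Hypotheses (X3 : X * X * X = 0) (trX : \tr X = 0) (trX2 : \tr (X * X) = 0).
Hypotheses (Y3 : Y * Y * Y = 0) (trY : \tr Y = 0) (trY2 : \tr (Y * Y) = 0).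
Hypothesis trw_J2_sqr_S33 :
  forall w, [:: 1, 1 & w]%N \in S33 -> trw (J2 F) X Y [:: 1, 1 & w]%N = 0.

Lemma trw_J2_sqr_cons_eq0 : forall k w, w != [::] -> trw (J2 F) X Y [:: k, k & w] = 0.
Proof.
have W20 w : [:: 1, 1 & w]%N \in S33 -> (\prod_(l <- w) Ysel (J2 F) X Y l) o2 o0 = 0.
  by move=> wS; rewrite -trw_J2_sqr_cons trw_J2_sqr_S33.
have X20 : X o2 o0 = 0 by have := W20 [:: 2]%N isT; rewrite big_seq1.
have Y20 : Y o2 o0 = 0 by have := W20 [:: 3]%N isT; rewrite big_seq1.
move: (W20 [:: 2; 2]%N isT) (W20 [:: 2; 3]%N isT) (W20 [:: 3; 2]%N isT) (W20 [:: 3; 3]%N isT).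
rewrite !big_cons !big_nil /= !mulr1 !mul_row2_col0 // => XX XY YX YY.
have [[X21 Y21] | [X10 Y10]] := mul_pairs_eq0 XX XY YX YY.
- apply: (trw_sqr_cons_row0 (i := o2) two_neq0).
  apply: (YselP (P := fun M => [/\ row o2 M = 0, \tr M = 0 & \tr (M * M) = 0]));
    split; by [rewrite ?row0 ?mul0r ?mxtrace0 | exact: row2_J2 | exact: mxtrace_J2
                   | exact: mxtrace_J2_sqr | exact: row2_cube_eq0].
- apply: (trw_sqr_cons_col0 (j := o0) two_neq0).
  apply: (YselP (P := fun M => [/\ col o0 M = 0, \tr M = 0 & \tr (M * M) = 0]));
    split; by [rewrite ?col0 ?mul0r ?mxtrace0 | exact: col0_J2 | exact: mxtrace_J2
                   | exact: mxtrace_J2_sqr | exact: col0_cube_eq0].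
Qed.

End J2Words.

Lemma P33'_sqr_cons : {in P33', forall w, exists k t, w = [:: k, k & t] /\ t != [::]}.
Proof.
have : all (fun w => if w is [:: k, l & t] then (k == l) && (t != [::]) else false) P33'.
  by [].
move/allP => P33'P w /P33'P; case: w => [|k [|l t]] //= /andP[/eqP <- t_neq0].
by exists k, t.
Qed.

Lemma P33'_infix :
  {in P33', forall w : seq nat,
     has (fun u => infix u w) [:: [:: 1; 1]; [:: 2; 2; 3; 3]; [:: 3; 3; 2; 2]]%N}.
Proof. exact/allP. Qed.

Section J1Words.
Variables (F : fieldType) (U V : 'M[F]_3).
Hypotheses (two_neq0 : 2%:R != 0 :> F).
Hypotheses (U3 : U * U * U = 0) (trU : \tr U = 0) (trU2 : \tr (U * U) = 0).
Hypotheses (V3 : V * V * V = 0) (trV : \tr V = 0) (trV2 : \tr (V * V) = 0).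
Hypotheses (trUUV : \tr (U * U * V) = 0) (trUVV : \tr (U * (V * V)) = 0).
Hypothesis trUUVV : \tr (U * U * (V * V)) = 0.

Lemma trw_J1_P33'_eq0 : {in P33', forall w, trw (J1 F) U V w = 0}.
Proof.
have VVUU : V * V * (U * U) = 0 by apply: sqr_mul_sqr_eq0.
have UUVV : U * U * (V * V) = 0.
  by apply: sqr_mul_sqr_eq0 => //; rewrite -mulmxE mxtrace_mulC mulmxE.
move=> w /P33'_infix/hasP[u uP uw]; rewrite /trw (prod_Ysel_infix_eq0 _ uw) ?mxtrace0 //.
move: uP; rewrite !inE => /or3P[] /eqP ->; rewrite !big_cons big_nil /= mulr1 ?mulrA.
- by rewrite J1_sqr.
- by rewrite -mulrA UUVV.
- by rewrite -mulrA VVUU.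
Qed.

End J1Words.

Theorem lemma6p1 (F : closedFieldType) (charF0 : [pchar F] =i pred0)
    (A2 A3 B2 B3 : 'M[F]_3) :
  nilpotent_mx A2 -> nilpotent_mx A3 -> nilpotent_mx B2 -> nilpotent_mx B3 ->
  (forall w, w \in S33 -> trw (J2 F) A2 A3 w = trw (J1 F) B2 B3 w) ->
  forall w, w \in P33 -> trw (J2 F) A2 A3 w = trw (J1 F) B2 B3 w.
Proof.
move=> /nilpotent_mx3[A2c trA2 trA22] /nilpotent_mx3[A3c trA3 trA32].
move=> /nilpotent_mx3[B2c trB2 trB22] /nilpotent_mx3[B3c trB3 trB32] eqS w.
rewrite mem_cat => /orP[/eqS // | wP'].
have two_neq0 : 2%:R != 0 :> F by move/pcharf0P: charF0 => ->.
have trwA_sqr : forall k w, w != [::] -> trw (J2 F) A2 A3 [:: k, k & w] = 0.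
  apply: trw_J2_sqr_cons_eq0 => // w' /eqS ->.
  by rewrite /trw !big_cons mulrA J1_sqr mul0r mxtrace0.
have trwB w' : w' \in S33 -> trw (J2 F) A2 A3 w' = 0 -> trw (J1 F) B2 B3 w' = 0.
  by move=> /eqS ->.
have [k [t [wE t_neq0]]] := P33'_sqr_cons wP'.
rewrite {1}wE trwA_sqr // trw_J1_P33'_eq0 //.
- have := trwB [:: 2; 2; 3]%N isT (trwA_sqr 2 [:: 3] isT).
  by rewrite /trw !big_cons big_nil /= mulr1 mulrA.
- have := trwB [:: 2; 3; 3]%N isT; rewrite -(trw_rot _ _ _ 1) trwA_sqr //.
  by rewrite /trw !big_cons big_nil /= mulr1 => ->.
- have := trwB [:: 2; 2; 3; 3]%N isT (trwA_sqr 2 [:: 3; 3] isT).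
  by rewrite /trw !big_cons big_nil /= mulr1 !mulrA.
Qed.
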